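(* Let $x_0>0$, $y_0>0$, and let $T>0$, $c_0>0$ satisfy \[ |x_0|+|x_0-y_0^2|T\le c_0,\quad |y_0|+|y_0-x_0^2|T\le c_0,\quad |x_0|+c_0T+c_0^2T\le c_0,\quad |y_0|+c_0T+c_0^2T\le c_0. \] Then there exists $(x,y)\in C^1([0,T];\mathbb{R}^2)$ solving \[ \dot x(t)=x(t)-\max_{s\in[0,t]}y^2(s),\qquad \dot y(t)=y(t)-\max_{s\in[0,t]}x^2(s),\quad t\in[0,T],\qquad x(0)=x_0,\ y(0)=y_0. \] *)

From Stdlib Require Import Reals.
Open Scope R_scope.

Definition has_deriv_on (f f' : R -> R) (a b : R) : Prop :=
  forall t, a <= t <= b ->
    forall eps, 0 < eps -> exists delta, 0 < delta /\
      forall h, h <> 0 -> a <= t + h <= b -> Rabs h < delta ->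
        Rabs ((f (t + h) - f t) / h - f' t) < eps.

Definition continuous_on (g : R -> R) (a b : R) : Prop :=
  forall t, a <= t <= b ->
    forall eps, 0 < eps -> exists delta, 0 < delta /\
      forall s, a <= s <= b -> Rabs (s - t) < delta -> Rabs (g s - g t) < eps.

Definition C1_on_with (f f' : R -> R) (a b : R) : Prop :=
  has_deriv_on f f' a b /\ continuous_on f' a b.

Definition is_max_on (g : R -> R) (a b m : R) : Prop :=
  (exists s, a <= s <= b /\ g s = m) /\ (forall s, a <= s <= b -> g s <= m).

(* Integrating the equations, a solution is a fixed point of the Picard map
     (u, v) |-> (x0 + int_0^t (u - max_[0,s] v^2), y0 + int_0^t (v - max_[0,s] u^2)).
   By h3 and h4 this map preserves the pairs of continuous functions bounded by c0 on [0,T].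
   On such pairs max_[0,s] v^2 is 2 c0-Lipschitz in v, so the integrand is (1 + 2 c0)-Lipschitz
   and, for the Bielecki weight exp (2 (1 + 2 c0) t), the Picard map contracts by a factor 1/2.
   The Picard iterates therefore converge uniformly at a geometric rate to a fixed point, which
   is C^1 by the fundamental theorem of calculus. *)

From Stdlib Require Import Reals Lra Lia Psatz.
From Coquelicot Require Import Coquelicot.
Open Scope R_scope.

Definition clamp (T t : R) : R := Rmin T (Rmax 0 t).

Lemma clamp_in T t : 0 <= T -> 0 <= clamp T t <= T.
Proof. intros; unfold clamp, Rmin, Rmax; repeat destruct Rle_dec; lra. Qed.

Lemma clamp_id T t : 0 <= t <= T -> clamp T t = t.
Proof. intros; unfold clamp, Rmin, Rmax; repeat destruct Rle_dec; lra. Qed.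

Lemma clamp_dist T s t : 0 <= T -> Rabs (clamp T s - clamp T t) <= Rabs (s - t).
Proof.
  intros; unfold clamp, Rmin, Rmax; repeat destruct Rle_dec;
    unfold Rabs; repeat destruct Rcase_abs; lra.
Qed.

Lemma exp_le_exp x y : x <= y -> exp x <= exp y.
Proof.
  intros [Hlt | ->]; [left; apply exp_increasing, Hlt | right; reflexivity].
Qed.

Lemma continuity_continuous_on f a b : continuity f -> continuous_on f a b.
Proof.
  intros Hf t _ eps Heps.
  destruct (Hf t eps Heps) as [d [Hd Hclose]].
  exists d; split; [exact Hd|]. intros s _ Hst.
  destruct (Req_dec s t) as [->|Hne].
  - unfold Rminus; rewrite Rplus_opp_r, Rabs_R0; exact Heps.
  - apply Hclose. split; [split; [exact I | congruence] | exact Hst].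
Qed.

Lemma continuity_clamp g T :
  0 <= T -> continuous_on g 0 T -> continuity (fun s => g (clamp T s)).
Proof.
  intros HT Hg t eps Heps.
  destruct (Hg (clamp T t) (clamp_in T t HT) eps Heps) as [d [Hd Hclose]].
  exists d; split; [exact Hd|]. intros s [_ Hst]. simpl in *. unfold R_dist in *.
  apply Hclose.
  - exact (clamp_in T s HT).
  - pose proof (clamp_dist T s t HT). lra.
Qed.

Lemma continuous_on_ext f g a b :
  (forall t, a <= t <= b -> f t = g t) -> continuous_on f a b -> continuous_on g a b.
Proof.
  intros Efg Hf t Ht eps Heps.
  destruct (Hf t Ht eps Heps) as [d [Hd Hclose]].
  exists d; split; [exact Hd|]. intros s Hs Hst. rewrite <- !Efg by assumption. auto.
Qed.

Lemma continuous_on_sq v T : 0 <= T -> continuous_on v 0 T -> continuous_on (fun r => v r ^ 2) 0 T.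
Proof.
  intros HT Hv.
  apply continuous_on_ext with (f := fun r => v (clamp T r) * v (clamp T r)).
  - intros t Ht. rewrite clamp_id by exact Ht. ring.
  - apply continuity_continuous_on, continuity_mult; apply continuity_clamp; assumption.
Qed.

Lemma is_max_on_ext g h a b m :
  (forall s, a <= s <= b -> g s = h s) -> is_max_on g a b m -> is_max_on h a b m.
Proof.
  intros Egh [[s [Hs Hm]] Hle]. split.
  - exists s. rewrite <- Egh by exact Hs. auto.
  - intros r Hr. rewrite <- Egh by exact Hr. auto.
Qed.

Lemma is_max_on_dist g h a b m n B :
  is_max_on g a b m -> is_max_on h a b n ->
  (forall s, a <= s <= b -> Rabs (g s - h s) <= B) -> Rabs (m - n) <= B.
Proof.
  intros [[sg [Hsg <-]] Hg] [[sh [Hsh <-]] Hh] HB.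
  pose proof (Hg sh Hsh). pose proof (Hh sg Hsg).
  pose proof (proj1 (Rabs_le_between _ _) (HB sg Hsg)).
  pose proof (proj1 (Rabs_le_between _ _) (HB sh Hsh)).
  apply Rabs_le. lra.
Qed.

Definition running_max (g : R -> R) (t : R) : R :=
  real (Lub_Rbar (fun v => exists s, 0 <= s <= t /\ v = g s)).

Section RunningMax.

Variables (g : R -> R) (T : R).
Hypothesis Hg : continuous_on g 0 T.

Lemma running_max_spec t : 0 <= t <= T -> is_max_on g 0 t (running_max g t).
Proof.
  intros Ht.
  destruct (continuity_ab_maj (fun s => g (clamp T s)) 0 t (proj1 Ht)) as [m [Hmax Hm]].
  { intros c _. apply continuity_clamp; [lra | exact Hg]. }
  assert (Hle : forall s, 0 <= s <= t -> g s <= g m).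
  { intros s Hs. specialize (Hmax s Hs). rewrite !clamp_id in Hmax by lra. exact Hmax. }
  replace (running_max g t) with (g m).
  - split; [exists m; auto | exact Hle].
  - unfold running_max. rewrite (is_lub_Rbar_unique _ (Finite (g m))); [reflexivity|].
    split.
    + intros _ [s [Hs ->]]. apply Hle, Hs.
    + intros b Hb. apply Hb. exists m; auto.
Qed.

Lemma running_max_increment a b e : 0 <= a <= b -> b <= T ->
  (forall r, a <= r <= b -> g r <= g a + e) ->
  running_max g a <= running_max g b <= running_max g a + e.
Proof.
  intros Hab HbT Hinc.
  destruct (running_max_spec a ltac:(lra)) as [[sa [Hsa <-]] Ha].
  destruct (running_max_spec b ltac:(lra)) as [[sb [Hsb <-]] Hb].
  split; [apply Hb; lra|].
  destruct (Rle_dec sb a).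
  - pose proof (Ha sb ltac:(lra)). pose proof (Hinc a ltac:(lra)). lra.
  - pose proof (Hinc sb ltac:(lra)). pose proof (Ha a ltac:(lra)). lra.
Qed.

Lemma running_max_continuous : continuous_on (running_max g) 0 T.
Proof.
  intros t Ht eps Heps.
  destruct (Hg t Ht (eps / 3) ltac:(lra)) as [d [Hd Hclose]].
  exists d; split; [exact Hd|]. intros s Hs Hst.
  assert (Hnear : forall a b, 0 <= a <= b -> b <= T -> Rabs (a - t) < d -> Rabs (b - t) < d ->
            Rabs (running_max g b - running_max g a) < eps).
  { intros a b Hab HbT Ha Hb.
    assert (Hinc : forall r, a <= r <= b -> g r <= g a + 2 * eps / 3).
    { intros r Hr.
      assert (Hrt : Rabs (r - t) < d).
      { apply Rabs_def2 in Ha, Hb. apply Rabs_def1; lra. }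
      pose proof (Rabs_def2 _ _ (Hclose r ltac:(lra) Hrt)).
      pose proof (Rabs_def2 _ _ (Hclose a ltac:(lra) Ha)). lra. }
    pose proof (running_max_increment a b _ Hab HbT Hinc).
    apply Rabs_def1; lra. }
  assert (Htt : Rabs (t - t) < d) by (unfold Rminus; rewrite Rplus_opp_r, Rabs_R0; exact Hd).
  destruct (Rle_dec s t).
  - rewrite Rabs_minus_sym. apply Hnear; lra || assumption.
  - apply Hnear; lra || assumption.
Qed.

End RunningMax.

Lemma is_lim_seq_geom_half C : is_lim_seq (fun n => C * (/ 2) ^ n) 0.
Proof.
  replace (Finite 0) with (Rbar_mult C 0) by (simpl; f_equal; ring).
  apply is_lim_seq_scal_l, is_lim_seq_geom. rewrite Rabs_pos_eq; lra.
Qed.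

Lemma geom_half_lt C eps : 0 < eps -> exists n, C * (/ 2) ^ n < eps.
Proof.
  intros Heps.
  destruct (proj2 (is_lim_seq_spec _ _) (is_lim_seq_geom_half C) (mkposreal eps Heps))
    as [N HN].
  exists N. specialize (HN N (le_n N)). simpl in HN.
  rewrite Rminus_0_r in HN. pose proof (Rle_abs (C * (/ 2) ^ N)). lra.
Qed.

Lemma le_of_le_geom_half a b C : (forall n, a <= b + C * (/ 2) ^ n) -> a <= b.
Proof.
  intros H.
  pose proof (is_lim_seq_le (fun _ => a) (fun n => b + C * (/ 2) ^ n) a (b + 0) H
    (is_lim_seq_const a) (is_lim_seq_plus' _ _ _ _ (is_lim_seq_const b) (is_lim_seq_geom_half C)))
    as Hle.
  simpl in Hle. lra.
Qed.

Lemma eq_of_dist_le_geom_half x y C : (forall n, Rabs (x - y) <= C * (/ 2) ^ n) -> x = y.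
Proof.
  intros H.
  assert (Hle : Rabs (x - y) <= 0).
  { apply le_of_le_geom_half with C. intros n. rewrite Rplus_0_l. apply H. }
  pose proof (Rabs_pos (x - y)).
  apply Rminus_diag_uniq, Rabs_eq_0. lra.
Qed.

Lemma abs_le_of_geom_half_approx x (p : nat -> R) c C :
  (forall n, Rabs (p n) <= c) -> (forall n, Rabs (x - p n) <= C * (/ 2) ^ n) -> Rabs x <= c.
Proof.
  intros Hp Hx. apply le_of_le_geom_half with C. intros n.
  pose proof (Rabs_triang (x - p n) (p n)).
  replace (x - p n + p n) with x in * by ring.
  pose proof (Hp n). pose proof (Hx n). lra.
Qed.

Lemma geom_half_cauchy (u : nat -> R) A :
  (forall n, Rabs (u (S n) - u n) <= A * (/ 2) ^ n) ->
  forall n k, Rabs (u (n + k)%nat - u n) <= 2 * A * (/ 2) ^ n.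
Proof.
  intros Hstep n.
  assert (HA : 0 <= A).
  { pose proof (Hstep O). pose proof (Rabs_pos (u 1%nat - u O)). simpl in *. lra. }
  assert (Hpartial : forall k, Rabs (u (n + k)%nat - u n) <= 2 * A * (/ 2) ^ n * (1 - (/ 2) ^ k)).
  { induction k as [|k IH].
    - rewrite Nat.add_0_r, Rminus_diag, Rabs_R0. simpl. lra.
    - rewrite Nat.add_succ_r.
      pose proof (Rabs_triang (u (S (n + k)) - u (n + k)%nat) (u (n + k)%nat - u n)).
      pose proof (Hstep (n + k)%nat) as Hlast. rewrite pow_add in Hlast.
      replace (u (S (n + k)) - u n)
        with (u (S (n + k)) - u (n + k)%nat + (u (n + k)%nat - u n)) by ring.
      replace (2 * A * (/ 2) ^ n * (1 - (/ 2) ^ S k))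
        with (A * ((/ 2) ^ n * (/ 2) ^ k) + 2 * A * (/ 2) ^ n * (1 - (/ 2) ^ k))
        by (simpl; field).
      lra. }
  intros k.
  assert (0 <= A * ((/ 2) ^ n * (/ 2) ^ k)).
  { apply Rmult_le_pos; [exact HA|].
    apply Rmult_le_pos; apply pow_le; lra. }
  pose proof (Hpartial k). lra.
Qed.

Lemma Lim_seq_geom_half_dist (u : nat -> R) A :
  (forall n, Rabs (u (S n) - u n) <= A * (/ 2) ^ n) ->
  forall n, Rabs (real (Lim_seq u) - u n) <= 2 * A * (/ 2) ^ n.
Proof.
  intros Hstep n.
  pose proof (geom_half_cauchy u A Hstep) as Hcauchy.
  assert (Hex : ex_finite_lim_seq u).
  { apply ex_lim_seq_cauchy_corr. intros eps.
    destruct (geom_half_lt (4 * A) eps (cond_pos eps)) as [N HN].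
    exists N. intros p q Hp Hq.
    pose proof (proj1 (Rabs_le_between _ _) (Hcauchy N (p - N)%nat)).
    pose proof (proj1 (Rabs_le_between _ _) (Hcauchy N (q - N)%nat)).
    replace (N + (p - N))%nat with p in * by lia.
    replace (N + (q - N))%nat with q in * by lia.
    apply Rabs_def1; lra. }
  destruct Hex as [l Hl]. rewrite (is_lim_seq_unique _ _ Hl). simpl.
  assert (Htail : is_lim_seq (fun k => Rabs (u (k + n)%nat - u n)) (Rabs (l - u n))).
  { apply (is_lim_seq_abs _ (l - u n)), is_lim_seq_minus'.
    - apply (is_lim_seq_incr_n u n l), Hl.
    - apply is_lim_seq_const. }
  assert (Hbound : forall k, Rabs (u (k + n)%nat - u n) <= 2 * A * (/ 2) ^ n).
  { intros k. rewrite Nat.add_comm. apply Hcauchy. }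
  exact (is_lim_seq_le _ _ _ _ Hbound Htail (is_lim_seq_const _)).
Qed.

Lemma continuous_on_geom_half_limit (p : nat -> R -> R) X a b C :
  (forall n, continuous_on (p n) a b) ->
  (forall n t, a <= t <= b -> Rabs (X t - p n t) <= C * (/ 2) ^ n) ->
  continuous_on X a b.
Proof.
  intros Hp Hclose t Ht eps Heps.
  destruct (geom_half_lt C (eps / 3) ltac:(lra)) as [n Hn].
  destruct (Hp n t Ht (eps / 3) ltac:(lra)) as [d [Hd Hpn]].
  exists d; split; [exact Hd|]. intros s Hs Hst.
  pose proof (proj1 (Rabs_le_between _ _) (Hclose n s Hs)).
  pose proof (proj1 (Rabs_le_between _ _) (Hclose n t Ht)).
  pose proof (Rabs_def2 _ _ (Hpn s Hs Hst)).
  apply Rabs_def1; lra.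
Qed.

Lemma ex_RInt_continuity f a b : continuity f -> ex_RInt f a b.
Proof.
  intros Hf. apply (ex_RInt_continuous (V := R_CompleteNormedModule)).
  intros z _. apply continuity_pt_filterlim, Hf.
Qed.

Lemma is_derive_primitive f a t : continuity f -> is_derive (fun s => a + RInt f 0 s) t (f t).
Proof.
  intros Hf.
  assert (HI : is_derive (fun s => RInt f 0 s) t (f t)).
  { apply (is_derive_RInt f (fun s => RInt f 0 s) 0 t).
    - apply filter_forall. intros b. apply (RInt_correct (V := R_CompleteNormedModule)).
      apply ex_RInt_continuity, Hf.
    - apply continuity_pt_filterlim, Hf. }
  pose proof (is_derive_plus _ _ t _ _ (is_derive_const a t) HI) as Hsum.
  replace (f t) with (plus zero (f t)) by (unfold plus, zero; simpl; ring).
  exact Hsum.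
Qed.

Lemma continuity_primitive f a : continuity f -> continuity (fun s => a + RInt f 0 s).
Proof.
  intros Hf t. apply (proj2 (continuity_pt_filterlim (fun s => a + RInt f 0 s) t)).
  apply (ex_derive_continuous (V := R_NormedModule) (fun s : R => a + RInt f 0 s)).
  eexists. apply is_derive_primitive, Hf.
Qed.

Lemma C1_on_with_primitive f a b c : continuity f -> C1_on_with (fun s => a + RInt f 0 s) f b c.
Proof.
  intros Hf. split; [|apply continuity_continuous_on, Hf].
  intros t _ eps Heps.
  destruct (proj1 (is_derive_Reals _ _ _) (is_derive_primitive f a t Hf) eps Heps) as [d Hd].
  exists d; split; [apply cond_pos|]. intros h Hh _ Hhd. apply Hd; assumption.
Qed.

Lemma RInt_exp_weight_le f L B t : 0 < L -> 0 <= B -> 0 <= t -> continuity f ->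
  (forall s, 0 <= s <= t -> Rabs (f s) <= L * B * exp (2 * L * s)) ->
  Rabs (RInt f 0 t) <= B / 2 * exp (2 * L * t).
Proof.
  intros HL HB Ht Hf Hle.
  assert (Hprim : is_RInt (fun s => L * B * exp (2 * L * s)) 0 t
                    (minus (B / 2 * exp (2 * L * t)) (B / 2 * exp (2 * L * 0)))).
  { apply (is_RInt_derive (fun s => B / 2 * exp (2 * L * s))).
    - intros s _. auto_derive; [exact I | field].
    - intros s _.
      apply (ex_derive_continuous (V := R_NormedModule) (fun s => L * B * exp (2 * L * s))).
      auto_derive. exact I. }
  pose proof (norm_RInt_le f _ 0 t _ _ Ht Hle
                (RInt_correct _ _ _ (ex_RInt_continuity f 0 t Hf)) Hprim) as Hnorm.
  change (norm (RInt f 0 t)) with (Rabs (RInt f 0 t)) in Hnorm.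
  unfold minus, plus, opp in Hnorm; simpl in Hnorm.
  rewrite Rmult_0_r, exp_0 in Hnorm. lra.
Qed.

(* The arguments are clamped to [0,T] so that the integrand is continuous on all of R,
   as Coquelicot's fundamental theorem of calculus requires. *)
Definition rhs (T : R) (u v : R -> R) (s : R) : R :=
  u (clamp T s) - running_max (fun r => v r ^ 2) (clamp T s).

Definition picard (a T : R) (u v : R -> R) (t : R) : R := a + RInt (rhs T u v) 0 t.

Lemma picard_0 a T u v : picard a T u v 0 = a.
Proof. unfold picard. rewrite RInt_point. unfold zero; simpl. ring. Qed.

Section PicardMap.

Variables (T : R) (u v : R -> R).
Hypotheses (HT : 0 <= T) (Hu : continuous_on u 0 T) (Hv : continuous_on v 0 T).

Lemma rhs_continuity : continuity (rhs T u v).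
Proof.
  apply continuity_minus.
  - apply continuity_clamp; assumption.
  - apply (continuity_clamp (running_max (fun r => v r ^ 2))); [exact HT|].
    apply running_max_continuous, continuous_on_sq; assumption.
Qed.

Lemma picard_continuity a : continuity (picard a T u v).
Proof. apply continuity_primitive, rhs_continuity. Qed.

Lemma C1_on_with_picard a : C1_on_with (picard a T u v) (rhs T u v) 0 T.
Proof. apply C1_on_with_primitive, rhs_continuity. Qed.

Lemma rhs_sub_max t : 0 <= t <= T ->
  is_max_on (fun s => v s ^ 2) 0 t (running_max (fun r => v r ^ 2) t) /\
  rhs T u v t = u t - running_max (fun r => v r ^ 2) t.
Proof.
  intros Ht. split.
  - apply (running_max_spec _ T); [apply continuous_on_sq|]; assumption.
  - unfold rhs. rewrite clamp_id by exact Ht. reflexivity.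
Qed.

Variable c : R.
Hypothesis Hbound : forall t, 0 <= t <= T -> Rabs (u t) <= c /\ Rabs (v t) <= c.

Lemma rhs_bound s : 0 <= s <= T -> Rabs (rhs T u v s) <= c + c ^ 2.
Proof.
  intros Hs. rewrite (proj2 (rhs_sub_max s Hs)).
  destruct (proj1 (rhs_sub_max s Hs)) as [[m [Hm <-]] _].
  pose proof (proj1 (Rabs_le_between _ _) (proj1 (Hbound s Hs))).
  pose proof (proj1 (Rabs_le_between _ _) (proj2 (Hbound m ltac:(lra)))).
  apply Rabs_le. nra.
Qed.

Lemma picard_bound a : Rabs a + c * T + c ^ 2 * T <= c ->
  forall t, 0 <= t <= T -> Rabs (picard a T u v t) <= c.
Proof.
  intros Ha t Ht. unfold picard.
  assert (HI : Rabs (RInt (rhs T u v) 0 t) <= (t - 0) * (c + c ^ 2)).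
  { apply abs_RInt_le_const; [lra | apply ex_RInt_continuity, rhs_continuity |].
    intros s Hs. apply rhs_bound. lra. }
  assert (0 <= c + c ^ 2).
  { pose proof (Rabs_pos (rhs T u v 0)). pose proof (rhs_bound 0 ltac:(lra)). lra. }
  pose proof (Rabs_triang a (RInt (rhs T u v) 0 t)). nra.
Qed.

End PicardMap.

Lemma rhs_dist T c u1 v1 u2 v2 s D : 0 <= T -> 0 <= s <= T ->
  continuous_on v1 0 T -> continuous_on v2 0 T ->
  (forall r, 0 <= r <= s -> Rabs (v1 r) <= c /\ Rabs (v2 r) <= c) ->
  Rabs (u1 s - u2 s) <= D -> (forall r, 0 <= r <= s -> Rabs (v1 r - v2 r) <= D) ->
  Rabs (rhs T u1 v1 s - rhs T u2 v2 s) <= (1 + 2 * c) * D.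
Proof.
  intros HT Hs Hv1 Hv2 Hbound Hu HvD.
  destruct (rhs_sub_max T u1 v1 HT Hv1 s Hs) as [Hmax1 ->].
  destruct (rhs_sub_max T u2 v2 HT Hv2 s Hs) as [Hmax2 ->].
  assert (Hsq : forall r, 0 <= r <= s -> Rabs (v1 r ^ 2 - v2 r ^ 2) <= 2 * c * D).
  { intros r Hr. destruct (Hbound r Hr) as [H1 H2].
    replace (v1 r ^ 2 - v2 r ^ 2) with ((v1 r - v2 r) * (v1 r + v2 r)) by ring.
    rewrite Rabs_mult, Rmult_comm.
    pose proof (Rabs_triang (v1 r) (v2 r)).
    apply Rmult_le_compat; [apply Rabs_pos | apply Rabs_pos | lra | apply HvD, Hr]. }
  pose proof (is_max_on_dist _ _ _ _ _ _ _ Hmax1 Hmax2 Hsq) as HM.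
  pose proof (proj1 (Rabs_le_between _ _) HM).
  pose proof (proj1 (Rabs_le_between _ _) Hu).
  apply Rabs_le. lra.
Qed.

Lemma picard_contraction a T c u1 v1 u2 v2 B : 0 <= T -> 0 <= c -> 0 <= B ->
  continuous_on u1 0 T -> continuous_on v1 0 T ->
  continuous_on u2 0 T -> continuous_on v2 0 T ->
  (forall t, 0 <= t <= T -> Rabs (v1 t) <= c /\ Rabs (v2 t) <= c) ->
  (forall t, 0 <= t <= T -> Rabs (u1 t - u2 t) <= B * exp (2 * (1 + 2 * c) * t) /\
                            Rabs (v1 t - v2 t) <= B * exp (2 * (1 + 2 * c) * t)) ->
  forall t, 0 <= t <= T ->
    Rabs (picard a T u1 v1 t - picard a T u2 v2 t) <= B / 2 * exp (2 * (1 + 2 * c) * t).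
Proof.
  intros HT Hc HB Hu1 Hv1 Hu2 Hv2 Hbound Hdist t Ht.
  assert (Hdiff : picard a T u1 v1 t - picard a T u2 v2 t =
                  RInt (fun s => rhs T u1 v1 s - rhs T u2 v2 s) 0 t).
  { unfold picard.
    rewrite (RInt_minus (V := R_CompleteNormedModule) (rhs T u1 v1) (rhs T u2 v2))
      by (apply ex_RInt_continuity, rhs_continuity; assumption).
    unfold minus, plus, opp; simpl. ring. }
  rewrite Hdiff.
  apply RInt_exp_weight_le; [lra | exact HB | lra | |].
  { apply continuity_minus; apply rhs_continuity; assumption. }
  intros s Hs.
  rewrite Rmult_assoc.
  apply rhs_dist; try assumption; try lra.
  - intros r Hr. apply Hbound. lra.
  - apply Hdist. lra.
  - intros r Hr. apply Rle_trans with (B * exp (2 * (1 + 2 * c) * r)); [apply Hdist; lra|].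
    apply Rmult_le_compat_l; [exact HB|]. apply exp_le_exp. nra.
Qed.

Lemma eq_picard_of_approx a T c u v (us vs : nat -> R -> R) t : 0 <= T -> 0 <= c -> 0 <= t <= T ->
  continuous_on u 0 T -> continuous_on v 0 T ->
  (forall n, continuous_on (us n) 0 T /\ continuous_on (vs n) 0 T) ->
  (forall n s, 0 <= s <= T -> Rabs (v s) <= c /\ Rabs (vs n s) <= c) ->
  (forall n s, 0 <= s <= T ->
     Rabs (u s - us n s) <= 4 * c * (/ 2) ^ n * exp (2 * (1 + 2 * c) * s) /\
     Rabs (v s - vs n s) <= 4 * c * (/ 2) ^ n * exp (2 * (1 + 2 * c) * s)) ->
  (forall n, us (S n) t = picard a T (us n) (vs n) t) ->
  u t = picard a T u v t.
Proof.
  intros HT Hc Ht Hu Hv Hcont Hbound Hclose Hiter.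
  apply eq_of_dist_le_geom_half with (C := 4 * c * exp (2 * (1 + 2 * c) * t)). intros n.
  destruct (Hcont n) as [Hun Hvn].
  assert (HB : 0 <= 4 * c * (/ 2) ^ n) by (pose proof (pow_le (/ 2) n ltac:(lra)); nra).
  pose proof (picard_contraction a T c u v (us n) (vs n) _ HT Hc HB Hu Hv Hun Hvn
                (Hbound n) (Hclose n) t Ht) as Hcontr.
  rewrite <- Hiter, Rabs_minus_sym in Hcontr.
  destruct (Hclose (S n) t Ht) as [HuS _]. simpl pow in HuS.
  pose proof (Rabs_triang (u t - us (S n) t) (us (S n) t - picard a T u v t)).
  replace (u t - us (S n) t + (us (S n) t - picard a T u v t))
    with (u t - picard a T u v t) in * by ring.
  lra.
Qed.

Fixpoint picard_iter (x0 y0 T : R) (n : nat) : (R -> R) * (R -> R) :=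
  match n with
  | O => (fun _ => x0, fun _ => y0)
  | S n => let p := picard_iter x0 y0 T n in
           (picard x0 T (fst p) (snd p), picard y0 T (snd p) (fst p))
  end.

Section PicardIteration.

Variables x0 y0 T c : R.
Hypotheses (HT : 0 <= T) (Hc : 0 <= c)
  (Hx0 : Rabs x0 + c * T + c ^ 2 * T <= c) (Hy0 : Rabs y0 + c * T + c ^ 2 * T <= c).

Local Notation xs n := (fst (picard_iter x0 y0 T n)).
Local Notation ys n := (snd (picard_iter x0 y0 T n)).
Local Notation weight t := (exp (2 * (1 + 2 * c) * t)).

Lemma picard_iter_invariant n :
  continuity (xs n) /\ continuity (ys n) /\
  forall t, 0 <= t <= T -> Rabs (xs n t) <= c /\ Rabs (ys n t) <= c.
Proof.
  induction n as [|n [Hx [Hy Hbound]]]; simpl.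
  - split; [|split]; try (apply continuity_const; intros ? ?; reflexivity).
    intros t _. assert (0 <= c * T) by nra. assert (0 <= c ^ 2 * T) by nra. lra.
  - assert (Hxc := continuity_continuous_on _ 0 T Hx).
    assert (Hyc := continuity_continuous_on _ 0 T Hy).
    split; [|split]; [apply picard_continuity; assumption .. |].
    intros t Ht. split.
    + apply (picard_bound T (xs n) (ys n)); assumption.
    + apply (picard_bound T (ys n) (xs n)); try assumption.
      intros s Hs. apply and_comm, Hbound, Hs.
Qed.

Lemma picard_iter_step n t : 0 <= t <= T ->
  Rabs (xs (S n) t - xs n t) <= 2 * c * weight t * (/ 2) ^ n /\
  Rabs (ys (S n) t - ys n t) <= 2 * c * weight t * (/ 2) ^ n.
Proof.
  revert t. induction n as [|n IH]; intros t Ht.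
  - destruct (proj2 (proj2 (picard_iter_invariant 1)) t Ht) as [Hx1 Hy1]. simpl in Hx1, Hy1 |- *.
    assert (Hw : 1 <= weight t) by (pose proof (exp_ineq1_le (2 * (1 + 2 * c) * t)); nra).
    assert (Rabs x0 <= c /\ Rabs y0 <= c) as [Hx Hy] by (split; nra).
    pose proof (Rabs_triang (picard x0 T (fun _ => x0) (fun _ => y0) t) (- x0)).
    pose proof (Rabs_triang (picard y0 T (fun _ => y0) (fun _ => x0) t) (- y0)).
    rewrite Rabs_Ropp in *. unfold Rminus. split; nra.
  - destruct (picard_iter_invariant n) as [Hxn [Hyn Hn]].
    destruct (picard_iter_invariant (S n)) as [HxS [HyS HS]].
    assert (HB : 0 <= 2 * c * (/ 2) ^ n) by (pose proof (pow_le (/ 2) n ltac:(lra)); nra).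
    replace (2 * c * weight t * (/ 2) ^ S n) with (2 * c * (/ 2) ^ n / 2 * weight t)
      by (simpl; field).
    assert (Hdist : forall s, 0 <= s <= T ->
      Rabs (xs (S n) s - xs n s) <= 2 * c * (/ 2) ^ n * weight s /\
      Rabs (ys (S n) s - ys n s) <= 2 * c * (/ 2) ^ n * weight s).
    { intros s Hs. destruct (IH s Hs). split; lra. }
    assert (Hcont := fun f (Hf : continuity f) => continuity_continuous_on f 0 T Hf).
    split.
    + apply (picard_contraction x0 T c (xs (S n)) (ys (S n)) (xs n) (ys n)); auto.
      intros s Hs. destruct (HS s Hs), (Hn s Hs). auto.
    + apply (picard_contraction y0 T c (ys (S n)) (xs (S n)) (ys n) (xs n)); auto.
      * intros s Hs. destruct (HS s Hs), (Hn s Hs). auto.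
      * intros s Hs. apply and_comm, Hdist, Hs.
Qed.

Let X t := real (Lim_seq (fun n => xs n t)).
Let Y t := real (Lim_seq (fun n => ys n t)).

Lemma picard_iter_limit_dist n t : 0 <= t <= T ->
  Rabs (X t - xs n t) <= 4 * c * weight t * (/ 2) ^ n /\
  Rabs (Y t - ys n t) <= 4 * c * weight t * (/ 2) ^ n.
Proof.
  intros Ht. replace (4 * c * weight t) with (2 * (2 * c * weight t)) by ring.
  split; [apply (Lim_seq_geom_half_dist (fun k => xs k t))
         |apply (Lim_seq_geom_half_dist (fun k => ys k t))];
    intros k; apply (picard_iter_step k t Ht).
Qed.

Lemma picard_iter_limit_continuous : continuous_on X 0 T /\ continuous_on Y 0 T.
Proof.
  assert (Hdist : forall n t, 0 <= t <= T ->
    Rabs (X t - xs n t) <= 4 * c * weight T * (/ 2) ^ n /\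
    Rabs (Y t - ys n t) <= 4 * c * weight T * (/ 2) ^ n).
  { intros n t Ht. destruct (picard_iter_limit_dist n t Ht).
    assert (weight t <= weight T) by (apply exp_le_exp; nra).
    assert (0 <= 4 * c * (/ 2) ^ n) by (pose proof (pow_le (/ 2) n ltac:(lra)); nra).
    split; nra. }
  split; [apply continuous_on_geom_half_limit with (p := fun n => xs n) (C := 4 * c * weight T)
         |apply continuous_on_geom_half_limit with (p := fun n => ys n) (C := 4 * c * weight T)];
    try (intros n t Ht; apply Hdist, Ht);
    intros n; apply continuity_continuous_on, (picard_iter_invariant n).
Qed.

Lemma picard_iter_limit_bound t : 0 <= t <= T -> Rabs (X t) <= c /\ Rabs (Y t) <= c.
Proof.
  intros Ht.
  split; [apply abs_le_of_geom_half_approx with (p := fun n => xs n t) (C := 4 * c * weight t)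
         |apply abs_le_of_geom_half_approx with (p := fun n => ys n t) (C := 4 * c * weight t)];
    intros n; apply (proj2 (proj2 (picard_iter_invariant n)) t Ht)
              || apply (picard_iter_limit_dist n t Ht).
Qed.

Lemma picard_iter_limit_fixed t : 0 <= t <= T ->
  X t = picard x0 T X Y t /\ Y t = picard y0 T Y X t.
Proof.
  intros Ht.
  destruct picard_iter_limit_continuous as [HXc HYc].
  assert (Hcont : forall n, continuous_on (xs n) 0 T /\ continuous_on (ys n) 0 T).
  { intros n. destruct (picard_iter_invariant n) as [Hx [Hy _]].
    split; apply continuity_continuous_on; assumption. }
  assert (Hbound : forall n s, 0 <= s <= T ->
    (Rabs (Y s) <= c /\ Rabs (ys n s) <= c) /\ (Rabs (X s) <= c /\ Rabs (xs n s) <= c)).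
  { intros n s Hs. destruct (picard_iter_limit_bound s Hs).
    destruct (proj2 (proj2 (picard_iter_invariant n)) s Hs). auto. }
  assert (Hclose : forall n s, 0 <= s <= T ->
    Rabs (X s - xs n s) <= 4 * c * (/ 2) ^ n * weight s /\
    Rabs (Y s - ys n s) <= 4 * c * (/ 2) ^ n * weight s).
  { intros n s Hs. destruct (picard_iter_limit_dist n s Hs). split; lra. }
  split.
  - apply (eq_picard_of_approx x0 T c X Y (fun n => xs n) (fun n => ys n)); auto.
    intros n s Hs. apply Hbound, Hs.
  - apply (eq_picard_of_approx y0 T c Y X (fun n => ys n) (fun n => xs n)); auto.
    + intros n. apply and_comm, Hcont.
    + intros n s Hs. apply Hbound, Hs.
    + intros n s Hs. apply and_comm, Hclose, Hs.
Qed.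

Lemma picard_fixed_point_exists : exists X Y : R -> R,
  continuous_on X 0 T /\ continuous_on Y 0 T /\
  (forall t, 0 <= t <= T -> X t = picard x0 T X Y t) /\
  (forall t, 0 <= t <= T -> Y t = picard y0 T Y X t).
Proof.
  exists X, Y.
  destruct picard_iter_limit_continuous as [HXc HYc].
  repeat split; try assumption; intros t Ht; apply picard_iter_limit_fixed, Ht.
Qed.

End PicardIteration.

Lemma rhs_of_fixed_point a b T u v t : 0 <= T -> continuous_on v 0 T -> 0 <= t <= T ->
  (forall s, 0 <= s <= T -> u s = picard a T u v s) ->
  (forall s, 0 <= s <= T -> v s = picard b T v u s) ->
  exists m, is_max_on (fun s => picard b T v u s ^ 2) 0 t m /\
            rhs T u v t = picard a T u v t - m.
Proof.
  intros HT Hv Ht Hufix Hvfix.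
  destruct (rhs_sub_max T u v HT Hv t Ht) as [Hmax ->].
  exists (running_max (fun r => v r ^ 2) t). split.
  - apply is_max_on_ext with (fun s => v s ^ 2); [|exact Hmax].
    intros s Hs. rewrite <- Hvfix by lra. reflexivity.
  - rewrite <- Hufix by exact Ht. reflexivity.
Qed.

Theorem mainTheorem4 (x0 y0 T c0 : R)
  (hx0 : 0 < x0) (hy0 : 0 < y0) (hT : 0 < T) (hc0 : 0 < c0)
  (h1 : Rabs x0 + Rabs (x0 - y0 ^ 2) * T <= c0)
  (h2 : Rabs y0 + Rabs (y0 - x0 ^ 2) * T <= c0)
  (h3 : Rabs x0 + c0 * T + c0 ^ 2 * T <= c0)
  (h4 : Rabs y0 + c0 * T + c0 ^ 2 * T <= c0) :
  exists x y x' y' : R -> R,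
    C1_on_with x x' 0 T /\ C1_on_with y y' 0 T /\
    x 0 = x0 /\ y 0 = y0 /\
    forall t, 0 <= t <= T ->
      (exists m, is_max_on (fun s => y s ^ 2) 0 t m /\ x' t = x t - m) /\
      (exists m, is_max_on (fun s => x s ^ 2) 0 t m /\ y' t = y t - m).
Proof.
  assert (HT : 0 <= T) by lra.
  destruct (picard_fixed_point_exists x0 y0 T c0 HT ltac:(lra) h3 h4)
    as (X & Y & HX & HY & HXfix & HYfix).
  exists (picard x0 T X Y), (picard y0 T Y X), (rhs T X Y), (rhs T Y X).
  split; [apply C1_on_with_picard; assumption|].
  split; [apply C1_on_with_picard; assumption|].
  split; [apply picard_0|]. split; [apply picard_0|].
  intros t Ht. split; apply rhs_of_fixed_point; assumption.
Qed.
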